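(* Let $K$ be a field of characteristic $p>0$ with $[K:K^p]<\infty$, and set $K'=K^{1/p}$. Let $N_0$ be the kernel of the morphism $\mathbf{G}_a^{(1/p)}\to\mathbf{G}_a$ described below. Then the endomorphism ring $\operatorname{End}_K(N_0)$ of $N_0$ as a $K$-group scheme is canonically isomorphic to $K'$, where $a'\in K'$ acts on $N_0$ as the restriction of multiplication by $a'$ on $\mathbf{G}_a^{(1/p)}$.
   Context: Here $\mathbf{G}_a^{(1/p)}$ is the Weil restriction of $\mathbf{G}_a$ along the absolute Frobenius $\operatorname{Spec}K\to\operatorname{Spec}K$; it is identified with $\operatorname{Res}_{K'/K}\mathbf{G}_a$, i.e. $R\mapsto R\otimes_K K'$, and the morphism $\mathbf{G}_a^{(1/p)}\to\mathbf{G}_a$ (the composite of the relative Frobenius of $\mathbf{G}_a^{(1/p)}$ with the adjunction counit) is given by $x\otimes a'\mapsto x^p a'^p$. Concretely, for a $p$-basis $t_1,\dots,t_r$ of $K$, $N_0$ is the closed subgroup scheme of $\mathbf{G}_a^{p^r}$ (coordinates $x_{i(1)\cdots i(r)}$, $0\le i(j)\le p-1$) defined by $\sum_{i(1),\dots,i(r)}x_{i(1)\cdots i(r)}^p t_1^{i(1)}\cdots t_r^{i(r)}=0$. Multiplication by $a'\in K'$ on $\mathbf{G}_a^{(1/p)}$ is compatible with multiplication by $a'^p\in K$ on $\mathbf{G}_a$, hence preserves $N_0$. *)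

From HB Require Import structures.
From mathcomp Require Import all_boot all_order all_algebra all_field.
Set Implicit Arguments. Unset Strict Implicit. Unset Printing Implicit Defensive.
Import GRing.Theory.
Local Open Scope ring_scope.

(* K a field, L = K' = K^{1/p} given as a (finite) field extension of K.
   G_a^{(1/p)}(A) = A (x)_K L is identified with row vectors 'rV[A]_n,
   n = [L:K], via the K-basis  pb = vbasis {:L}  of L:
   x  <->  sum_i x_i (x) pb_i. *)
Section N0.
Variables (K : fieldType) (L : fieldExtType K) (p : nat).

Definition pb : (\dim {:L}).-tuple L := vbasis {:L}.

(* the element pb_i ^ p, which lies in K, viewed as an element of K *)
Definition frobc (i : 'I_(\dim {:L})) : K :=
  coord [tuple (1 : L)] ord0 (tnth pb i ^+ p).

(* N_0(A) = kernel of  G_a^{(1/p)}(A) -> G_a(A),  x (x) a' |-> x^p a'^p *)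
Definition inN0 (A : comAlgType K) (x : 'rV[A]_(\dim {:L})) : bool :=
  \sum_(i < \dim {:L}) (x 0 i) ^+ p * (frobc i)%:A == 0.

Definition mulL (a : L) (A : comAlgType K) (x : 'rV[A]_(\dim {:L}))
  : 'rV[A]_(\dim {:L}) :=
  \row_j \sum_(i < \dim {:L}) x 0 i * (coord pb j (a * tnth pb i))%:A.

(* an endomorphism of the K-group scheme N_0, given by its functor of points
   on commutative K-algebras (Yoneda): a family of maps preserving N_0,
   additive on N_0, and natural in K-algebra morphisms.  Two such are equal
   as endomorphisms iff they agree on all N_0(A). *)
Definition is_endo
  (eta : forall A : comAlgType K, 'rV[A]_(\dim {:L}) -> 'rV[A]_(\dim {:L})) : Prop :=
  [/\ (forall (A : comAlgType K) x, inN0 x -> inN0 (eta A x)),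
      (forall (A : comAlgType K) x y, inN0 x -> inN0 y ->
          eta A (x + y) = eta A x + eta A y) &
      (forall (A B : comAlgType K) (f : {lrmorphism A -> B}) x, inN0 x ->
          map_mx f (eta A x) = eta B (map_mx f x))].

End N0.

(* An endomorphism of N_0 is a natural transformation of its functor of points,
   so it is determined by its value on the universal point of the coordinate ring
   K[X][W]/(W^p - w) of N_0, where W is the coordinate x_i0 and w the value of
   x_i0^p forced by the equation of N_0.  Additivity, applied to the tangent
   vector eps e_i0 over the dual numbers, shows that every coordinate of the image
   of the universal point has a constant W-derivative k_j, hence (its W-degree
   being < p) equals r_j + k_j W with r_j in K[X].  Lifting the equation of N_0 to
   L[X], where p-th powers are injective, forces r_j = sum_(i <> i0) coord_j(a e_i)
   X_i with a = (sum_j k_j e_j) / e_i0, i.e. the endomorphism is multiplication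
   by a. *)

From HB Require Import structures.
From mathcomp Require Import all_boot all_order all_algebra all_field.
From mathcomp Require Import mpoly.
Set Implicit Arguments. Unset Strict Implicit. Unset Printing Implicit Defensive.
Import GRing.Theory Pdiv.Ring Pdiv.RingMonic.
Local Open Scope ring_scope.

Section Frobenius.
Variables (R : comNzRingType) (p : nat).
Hypothesis pcharRp : p \in [pchar R].

Lemma pchar_exprD (x y : R) : (x + y) ^+ p = x ^+ p + y ^+ p.
Proof. exact: (rmorphD (pFrobenius_aut pcharRp)). Qed.

Lemma pchar_exprB (x y : R) : (x - y) ^+ p = x ^+ p - y ^+ p.
Proof. exact: (rmorphB (pFrobenius_aut pcharRp)). Qed.

Lemma pchar_expr_sum (I : Type) (r : seq I) (P : pred I) (F : I -> R) :
  (\sum_(i <- r | P i) F i) ^+ p = \sum_(i <- r | P i) F i ^+ p.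
Proof. exact: (rmorph_sum (pFrobenius_aut pcharRp)). Qed.

End Frobenius.

Lemma algM (R : pzSemiRingType) (A : lSemiAlgType R) (k m : R) :
  (k * m)%:A = k%:A * m%:A :> A.
Proof. by rewrite -scalerA mulr_algl. Qed.

Section DualNumbers.
Variables (K : fieldType) (A : comAlgType K).

(* The carrier A * A also has the componentwise ring structure of pairs; casts
   to [dual] are needed to select the dual-number one. *)
Definition dual : Type := (A * A)%type.
HB.instance Definition _ := GRing.Lmodule.on dual.

Definition dual_mul (x y : dual) : dual := (x.1 * y.1, x.1 * y.2 + x.2 * y.1).

Fact dual_mulA : associative dual_mul.
Proof.
move=> [a b] [c d] [e f]; congr (_, _); rewrite /= ?mulrA //.
by rewrite !mulrDr !mulrDl !mulrA addrA.
Qed.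

Fact dual_mulC : commutative dual_mul.
Proof. by move=> [a b] [c d]; congr (_, _); rewrite /= mulrC // addrC !(mulrC c). Qed.

Fact dual_mul1 : left_id (1, 0) dual_mul.
Proof. by move=> [a b]; rewrite /dual_mul /= !mul1r mul0r addr0. Qed.

Fact dual_mulDl : left_distributive dual_mul +%R.
Proof.
by move=> [a b] [c d] [e f]; congr (_, _); rewrite /= !mulrDl // addrACA.
Qed.

Fact dual_one_neq0 : ((1, 0) : dual) != 0.
Proof. by apply/eqP => -[/eqP]; rewrite oner_eq0. Qed.

HB.instance Definition _ := GRing.Zmodule_isComNzRing.Build dual
  dual_mulA dual_mulC dual_mul1 dual_mulDl dual_one_neq0.

Lemma dual_mulE (x y : dual) : x * y = (x.1 * y.1, x.1 * y.2 + x.2 * y.1).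
Proof. by []. Qed.

Fact dual_scaleAl (k : K) (x y : dual) : k *: (x * y) = (k *: x : dual) * y.
Proof.
by apply: injective_projections; rewrite /= -!scalerAl // scalerDr.
Qed.

HB.instance Definition _ := GRing.Lmodule_isLalgebra.Build K dual dual_scaleAl.
HB.instance Definition _ := GRing.Lalgebra_isComAlgebra.Build K dual.

Definition eps : dual := (0, 1).

Lemma eps_expr n : (1 < n)%N -> eps ^+ n = 0.
Proof.
case: n => [|[|n]] // _; rewrite !exprS mulrA.
have -> : eps * eps = 0 by rewrite dual_mulE /= !mul0r mulr0 addr0.
by rewrite !mul0r.
Qed.

Definition dual_const (a : A) : dual := (a, 0).

Fact dual_const_is_zmod_morphism : zmod_morphism dual_const.
Proof. by move=> a b; congr (_, _); rewrite /= subrr. Qed.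

Fact dual_const_is_monoid_morphism : monoid_morphism dual_const.
Proof. by split=> // a b; congr (_, _); rewrite /= mulr0 mul0r addr0. Qed.

Fact dual_const_is_scalable : scalable dual_const.
Proof. by move=> k a; congr (_, _); rewrite /= scaler0. Qed.

HB.instance Definition _ := GRing.isZmodMorphism.Build A dual dual_const
  dual_const_is_zmod_morphism.
HB.instance Definition _ := GRing.isMonoidMorphism.Build A dual dual_const
  dual_const_is_monoid_morphism.
HB.instance Definition _ := GRing.isScalable.Build K A dual *:%R dual_const
  dual_const_is_scalable.

Definition dual_fst (x : dual) : A := x.1.

Fact dual_fst_is_zmod_morphism : zmod_morphism dual_fst. Proof. by []. Qed.
Fact dual_fst_is_monoid_morphism : monoid_morphism dual_fst. Proof. by []. Qed.
Fact dual_fst_is_scalable : scalable dual_fst. Proof. by []. Qed.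

HB.instance Definition _ := GRing.isZmodMorphism.Build dual A dual_fst
  dual_fst_is_zmod_morphism.
HB.instance Definition _ := GRing.isMonoidMorphism.Build dual A dual_fst
  dual_fst_is_monoid_morphism.
HB.instance Definition _ := GRing.isScalable.Build K dual A *:%R dual_fst
  dual_fst_is_scalable.

Lemma horner_dual (P : {poly A}) (a : A) :
  (map_poly dual_const P).[(a, 1)] = (P.[a], P^`().[a]).
Proof.
elim/poly_ind: P => [|P c IH]; first by rewrite map_poly0 deriv0 !horner0.
rewrite rmorphD rmorphM /= map_polyX map_polyC /= hornerMXaddC [LHS]hornerMXaddC IH.
rewrite derivMXaddC hornerD hornerMX.
by apply: injective_projections; rewrite //= mulr1 addr0.
Qed.

End DualNumbers.

Arguments dual_const {K} A.
Arguments dual_fst {K} A.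

Section DualMap.
Variables (K : fieldType) (A B : comAlgType K) (f : {lrmorphism A -> B}).

Definition dual_map (x : dual A) : dual B := (f x.1, f x.2).

Fact dual_map_is_zmod_morphism : zmod_morphism dual_map.
Proof. by move=> [a b] [c d]; congr (_, _); rewrite /= rmorphB. Qed.

Fact dual_map_is_monoid_morphism : monoid_morphism dual_map.
Proof.
split=> [|[a b] [c d]]; congr (_, _); rewrite /= ?rmorph1 ?rmorph0 //.
  by rewrite rmorphM.
by rewrite rmorphD !rmorphM.
Qed.

Fact dual_map_is_scalable : scalable dual_map.
Proof. by move=> k [a b]; congr (_, _); rewrite /= linearZ. Qed.

HB.instance Definition _ := GRing.isZmodMorphism.Build (dual A) (dual B) dual_map
  dual_map_is_zmod_morphism.
HB.instance Definition _ := GRing.isMonoidMorphism.Build (dual A) (dual B) dual_map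
  dual_map_is_monoid_morphism.
HB.instance Definition _ := GRing.isScalable.Build K (dual A) (dual B) *:%R dual_map
  dual_map_is_scalable.

End DualMap.

Section ScalarEmbedding.
Variables (K : fieldType) (A : comAlgType K).

Definition scalar_alg (k : K^o) : A := k%:A.

Fact scalar_alg_is_zmod_morphism : zmod_morphism scalar_alg.
Proof. by move=> a b; rewrite /scalar_alg scalerBl. Qed.

Fact scalar_alg_is_monoid_morphism : monoid_morphism scalar_alg.
Proof. by split=> [|a b]; rewrite /scalar_alg ?scale1r // -scalerAl mul1r scalerA. Qed.

Fact scalar_alg_is_scalable : scalable scalar_alg.
Proof. by move=> a b; rewrite /scalar_alg scalerA. Qed.

HB.instance Definition _ := GRing.isZmodMorphism.Build K^o A scalar_alg
  scalar_alg_is_zmod_morphism.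
HB.instance Definition _ := GRing.isMonoidMorphism.Build K^o A scalar_alg
  scalar_alg_is_monoid_morphism.
HB.instance Definition _ := GRing.isScalable.Build K K^o A *:%R scalar_alg
  scalar_alg_is_scalable.

End ScalarEmbedding.

Section N0Basics.
Variables (K : fieldType) (L : fieldExtType K) (p : nat).
Hypothesis pcharKp : p \in [pchar K].
Hypothesis frobL : forall y : L, y ^+ p \in 1%VS.

Local Notation n := (\dim {:L}).
Local Notation e i := (tnth (pb L) i).
Local Notation c i := (frobc (L:=L) p i).

Lemma prime_p : prime p. Proof. exact: pcharf_prime pcharKp. Qed.
Lemma p_gt1 : (1 < p)%N. Proof. exact: prime_gt1 prime_p. Qed.
Lemma p_gt0 : (0 < p)%N. Proof. exact: prime_gt0 prime_p. Qed.

Lemma lalg_pchar (A : lalgType K) : p \in [pchar A].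
Proof. by rewrite (pchar_lalg A). Qed.

Lemma pb_free : free (pb L).
Proof. exact: basis_free (vbasisP {:L}). Qed.

Lemma pb_neq0 i : e i != 0.
Proof. exact: free_not0 pb_free (mem_tnth i (pb L)). Qed.

Lemma pb_expand (v : L) : v = \sum_(i < n) coord (pb L) i v *: e i.
Proof.
have v_span : v \in <<pb L>>%VS by rewrite (span_basis (vbasisP {:L})) memvf.
by rewrite {1}(coord_span v_span); apply: eq_bigr => i _; rewrite (tnth_nth 0).
Qed.

Lemma coord_pb_sum (k : 'I_n -> K) j : coord (pb L) j (\sum_(i < n) k i *: e i) = k j.
Proof.
have := coord_sum_free k j pb_free.
by under eq_bigr do rewrite -tnth_nth.
Qed.

Lemma coord_pb i j : coord (pb L) j (e i) = (i == j)%:R.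
Proof. by rewrite (tnth_nth 0) coord_free // pb_free. Qed.

Lemma frobcE i : e i ^+ p = (c i)%:A.
Proof.
rewrite /frobc; have /vlineP [k ->] := frobL (e i).
have free1 : free [tuple (1 : L)] by rewrite /free /= span_seq1 dim_vline oner_neq0.
have := coord_free ord0 ord0 free1; rewrite eqxx /= => coord1.
by rewrite linearZ /= coord1 mulr1.
Qed.

Lemma frobc_neq0 i : c i != 0.
Proof.
apply: contraNneq (expf_neq0 p (pb_neq0 i)) => ci0.
by rewrite frobcE ci0 scale0r.
Qed.

Lemma coord_mul (a b : L) i j :
  coord (pb L) j (a * b * e i) =
  \sum_(k < n) coord (pb L) k (b * e i) * coord (pb L) j (a * e k).
Proof.
rewrite -mulrA {1}(pb_expand (b * e i)) mulr_sumr linear_sum /=.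
by apply: eq_bigr => k _; rewrite -scalerAr linearZ.
Qed.

Lemma mulL1 (A : comAlgType K) (x : 'rV[A]_n) : mulL 1 x = x.
Proof.
apply/rowP => j; rewrite mxE (bigD1 j) //= big1 => [|i /negbTE ij].
  by rewrite mul1r coord_pb eqxx scale1r mulr1 addr0.
by rewrite mul1r coord_pb ij scale0r mulr0.
Qed.

Lemma mulLDl (a b : L) (A : comAlgType K) (x : 'rV[A]_n) :
  mulL (a + b) x = mulL a x + mulL b x.
Proof.
apply/rowP => j; rewrite !mxE -big_split /=; apply: eq_bigr => i _.
by rewrite mulrDl linearD /= scalerDl mulrDr.
Qed.

Lemma mulLM (a b : L) (A : comAlgType K) (x : 'rV[A]_n) :
  mulL (a * b) x = mulL a (mulL b x).
Proof.
apply/rowP => j; rewrite !mxE.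
under [RHS]eq_bigr do rewrite mxE mulr_suml.
rewrite exchange_big /=; apply: eq_bigr => i _.
rewrite coord_mul scaler_suml mulr_sumr; apply: eq_bigr => k _.
by rewrite -mulrA -scalerAl mul1r scalerA.
Qed.

Lemma mulLDr (a : L) (A : comAlgType K) (x y : 'rV[A]_n) :
  mulL a (x + y) = mulL a x + mulL a y.
Proof.
apply/rowP => j; rewrite !mxE -big_split /=; apply: eq_bigr => i _.
by rewrite mxE mulrDl.
Qed.

Lemma map_mulL (a : L) (A B : comAlgType K) (f : {lrmorphism A -> B}) (x : 'rV[A]_n) :
  map_mx f (mulL a x) = mulL a (map_mx f x).
Proof.
apply/rowP => j; rewrite !mxE rmorph_sum; apply: eq_bigr => i _.
by rewrite [in RHS]mxE !mulr_algr; apply: linearZ.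
Qed.

Lemma sum_coord_mul_expr (a : L) (l : K) i : a ^+ p = l%:A ->
  \sum_(j < n) coord (pb L) j (a * e i) ^+ p * c j = l * c i.
Proof.
move=> ap; apply: (fmorph_inj (in_alg L)); rewrite /= algM -frobcE -ap -exprMn.
rewrite {2}(pb_expand (a * e i)) (pchar_expr_sum (lalg_pchar L)) scaler_suml.
by apply: eq_bigr => j _; rewrite exprZn frobcE scalerA.
Qed.

Lemma mulL_N0 (a : L) (A : comAlgType K) (x : 'rV[A]_n) :
  inN0 p x -> inN0 p (mulL a x).
Proof.
have /vlineP [l ap] := frobL a.
move=> /eqP x_N0; apply/eqP.
under eq_bigr do rewrite /mulL mxE (pchar_expr_sum (lalg_pchar A)) mulr_suml.
rewrite exchange_big /=.
transitivity (l%:A * \sum_(i < n) x 0 i ^+ p * (c i)%:A); last by rewrite x_N0 mulr0.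
rewrite mulr_sumr; apply: eq_bigr => i _.
transitivity (x 0 i ^+ p * (\sum_(j < n) coord (pb L) j (a * e i) ^+ p * c j)%:A).
  rewrite scaler_suml mulr_sumr; apply: eq_bigr => j _.
  by rewrite exprMn exprZn expr1n -mulrA -algM.
by rewrite (sum_coord_mul_expr i ap) algM mulrCA.
Qed.

Lemma mulL_is_endo (a : L) : is_endo p (mulL a).
Proof.
split=> [A x|A x y _ _|A B f x _]; first exact: mulL_N0.
  exact: mulLDr.
exact: map_mulL.
Qed.

Lemma inN0_0 (A : comAlgType K) : inN0 p (0 : 'rV[A]_n).
Proof. by apply/eqP; apply: big1 => i _; rewrite mxE expr0n gtn_eqF ?p_gt0 // mul0r. Qed.

Lemma inN0D (A : comAlgType K) (x y : 'rV[A]_n) :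
  inN0 p x -> inN0 p y -> inN0 p (x + y).
Proof.
move=> /eqP x_N0 /eqP y_N0; apply/eqP.
under eq_bigr do rewrite mxE (pchar_exprD (lalg_pchar A)) mulrDl.
by rewrite big_split /= x_N0 y_N0 addr0.
Qed.

Lemma inN0_map (A B : comAlgType K) (f : {lrmorphism A -> B}) (x : 'rV[A]_n) :
  inN0 p x -> inN0 p (map_mx f x).
Proof.
move=> /eqP x_N0; apply/eqP.
transitivity (f (\sum_i x 0 i ^+ p * (c i)%:A)); last by rewrite x_N0 rmorph0.
rewrite rmorph_sum; apply: eq_bigr => i _.
by rewrite mxE rmorphM rmorphXn /= (rmorph_alg f).
Qed.

End N0Basics.

Section Endomorphisms.
Variables (K : fieldType) (L : fieldExtType K) (p : nat).
Variable eta : forall A : comAlgType K, 'rV[A]_(\dim {:L}) -> 'rV[A]_(\dim {:L}).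
Arguments eta : clear implicits.
Hypothesis eta_endo : is_endo p eta.

Lemma endo_inN0 (A : comAlgType K) x : inN0 p x -> inN0 p (eta A x).
Proof. by case: eta_endo => endoN0 _ _; apply: endoN0. Qed.

Lemma endoD (A : comAlgType K) x y :
  inN0 p x -> inN0 p y -> eta A (x + y) = eta A x + eta A y.
Proof. by case: eta_endo => _ endoD _; apply: endoD. Qed.

Lemma endo_map (A B : comAlgType K) (f : {lrmorphism A -> B}) x :
  inN0 p x -> map_mx f (eta A x) = eta B (map_mx f x).
Proof. by case: eta_endo => _ _ endo_map; apply: endo_map. Qed.

Hypothesis pcharKp : p \in [pchar K].

Lemma endo0 (A : comAlgType K) : eta A 0 = 0.
Proof.
have := endoD (inN0_0 L pcharKp A) (inN0_0 L pcharKp A).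
by rewrite addr0 => /eqP; rewrite -subr_eq subrr eq_sym => /eqP.
Qed.

End Endomorphisms.

Section TangentVector.
Variables (K : fieldType) (L : fieldExtType K) (p : nat).
Hypothesis pcharKp : p \in [pchar K].

Local Notation n := (\dim {:L}).
Local Notation e i := (tnth (pb L) i).

Definition i0 : 'I_n := Ordinal (adim_gt0 {:L}).

Definition eps_row (A : comAlgType K) : 'rV[dual A]_n :=
  \row_i (if i == i0 then eps A else 0).

Lemma eps_row_N0 (A : comAlgType K) : inN0 p (eps_row A).
Proof.
apply/eqP; apply: big1 => i _; rewrite mxE.
by case: eqP => _; rewrite ?eps_expr ?expr0n ?gtn_eqF ?(p_gt1 pcharKp) ?(p_gt0 pcharKp) ?mul0r.
Qed.

Lemma map_eps_row (A B : comAlgType K) (f : {lrmorphism A -> B}) :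
  map_mx (dual_map f) (eps_row A) = eps_row B.
Proof.
apply/rowP => i; rewrite !mxE; case: eqP => _; last exact: rmorph0.
by apply: injective_projections; rewrite /= ?rmorph0 ?rmorph1.
Qed.

Lemma mulL_eps_row (a : L) (A : comAlgType K) j :
  mulL a (eps_row A) 0 j = (0, (coord (pb L) j (a * e i0))%:A).
Proof.
rewrite mxE (bigD1 i0) //= big1 => [|i /negbTE i_neq0]; last by rewrite mxE i_neq0 mul0r.
rewrite mxE eqxx addr0.
by apply: injective_projections; rewrite /= mul0r ?add0r ?mul1r.
Qed.

Lemma mulL_inj (a b : L) :
  (forall (A : comAlgType K) (x : 'rV[A]_n), inN0 p x -> mulL a x = mulL b x) ->
  a = b.
Proof.
move=> /(_ _ (eps_row K^o) (eps_row_N0 _)) /rowP mulLab.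
have /mulIf : e i0 != 0 := pb_neq0 i0; apply.
rewrite (pb_expand (a * e i0)) (pb_expand (b * e i0)); apply: eq_bigr => j _.
have := etrans (esym (mulL_eps_row a K^o j)) (etrans (mulLab j) (mulL_eps_row b K^o j)).
by move=> /(congr1 snd) /(fmorph_inj (in_alg K^o)) ->.
Qed.

End TangentVector.

Section QpolyAlgebra.
Variables (K : fieldType) (R : comAlgType K) (h : {poly R}).

Definition qpoly_alg : Type := {poly %/ h}.
HB.instance Definition _ := GRing.ComNzRing.on qpoly_alg.

Definition qpoly_alg_scale (k : K) (u : qpoly_alg) : qpoly_alg :=
  (k%:A : R) *: (u : {poly %/ h}).

Fact qpoly_alg_scaleA a b u :
  qpoly_alg_scale a (qpoly_alg_scale b u) = qpoly_alg_scale (a * b) u.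
Proof. by rewrite /qpoly_alg_scale scalerA -algM. Qed.

Fact qpoly_alg_scale1 : left_id 1 qpoly_alg_scale.
Proof. by move=> u; rewrite /qpoly_alg_scale !scale1r. Qed.

Fact qpoly_alg_scaleDr : right_distributive qpoly_alg_scale +%R.
Proof. by move=> a u v; rewrite /qpoly_alg_scale scalerDr. Qed.

Fact qpoly_alg_scaleDl u : {morph qpoly_alg_scale^~ u : a b / a + b}.
Proof. by move=> a b; rewrite /qpoly_alg_scale scalerDl scalerDl. Qed.

HB.instance Definition _ := GRing.Zmodule_isLmodule.Build K qpoly_alg
  qpoly_alg_scaleA qpoly_alg_scale1 qpoly_alg_scaleDr qpoly_alg_scaleDl.

Fact qpoly_alg_scaleAl (a : K) (u v : qpoly_alg) : a *: (u * v) = a *: u * v.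
Proof. exact: (@scalerAl R {poly %/ h}). Qed.

HB.instance Definition _ := GRing.Lmodule_isLalgebra.Build K qpoly_alg
  qpoly_alg_scaleAl.
HB.instance Definition _ := GRing.Lalgebra_isComAlgebra.Build K qpoly_alg.

End QpolyAlgebra.

Section QpolyHorner.
Variables (R : comNzRingType) (h : {poly R}).

Lemma in_qpolyC (c : R) : in_qpoly h c%:P = qpolyC h c.
Proof.
apply: val_inj; rewrite [RHS]qpolyCE; apply: in_qpoly_small.
exact: leq_ltn_trans (size_polyC_leq1 c) (size_mk_monic_gt1 h).
Qed.

Lemma horner_qpolyX (q : {poly R}) : (map_poly (qpolyC h) q).['qX] = in_qpoly h q.
Proof.
elim/poly_ind: q => [|q c IHq]; first by rewrite map_poly0 horner0 rmorph0.
rewrite [in RHS]rmorphD [in RHS]rmorphM /= in_qpolyC.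
by rewrite rmorphD rmorphM /= map_polyX map_polyC hornerMXaddC IHq.
Qed.

Lemma qpoly_horner (u : {poly %/ h}) : (map_poly (qpolyC h) u).['qX] = u.
Proof.
by rewrite horner_qpolyX; apply: val_inj; apply: in_qpoly_small; apply: size_mk_monic.
Qed.

Lemma qpolyC_inj : injective (qpolyC h).
Proof.
by move=> a b /(congr1 (fun u : {poly %/ h} => u : {poly R})); rewrite !qpolyCE => /polyC_inj.
Qed.

Lemma in_qpoly_mk_monic : in_qpoly h (mk_monic h) = 0.
Proof. by apply: val_inj => /=; rewrite rmodpp ?monic_mk_monic. Qed.

End QpolyHorner.

Section QpolyEval.
Variables (K : fieldType) (R : comAlgType K) (h : {poly R}).
Variables (A : comAlgType K) (rho : {lrmorphism R -> A}) (b : A).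

Definition qpoly_eval of root (map_poly rho (mk_monic h)) b :=
  fun u : qpoly_alg h => (map_poly rho (u : {poly %/ h})).[b].

Hypothesis root_b : root (map_poly rho (mk_monic h)) b.

Lemma horner_map_rmodp (q : {poly R}) :
  (map_poly rho (rmodp q (mk_monic h))).[b] = (map_poly rho q).[b].
Proof.
rewrite [in RHS](rdivp_eq (monic_mk_monic h) q) rmorphD rmorphM /=.
by rewrite hornerD hornerM (rootP root_b) mulr0 add0r.
Qed.

Fact qpoly_eval_is_zmod_morphism : zmod_morphism (qpoly_eval root_b).
Proof. by move=> u v; rewrite /qpoly_eval /= rmorphB hornerD hornerN. Qed.

Fact qpoly_eval_is_monoid_morphism : monoid_morphism (qpoly_eval root_b).
Proof.
split=> [|u v]; rewrite /qpoly_eval; first by rewrite qpolyCE rmorph1 hornerC.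
by rewrite poly_of_qpolyM horner_map_rmodp rmorphM hornerM.
Qed.

Fact qpoly_eval_is_scalable : scalable (qpoly_eval root_b).
Proof.
move=> k u; rewrite /qpoly_eval /= map_polyZ hornerZ.
by have /= -> := rmorph_alg rho k; rewrite mulr_algl.
Qed.

HB.instance Definition _ := GRing.isZmodMorphism.Build (qpoly_alg h) A
  (qpoly_eval root_b) qpoly_eval_is_zmod_morphism.
HB.instance Definition _ := GRing.isMonoidMorphism.Build (qpoly_alg h) A
  (qpoly_eval root_b) qpoly_eval_is_monoid_morphism.
HB.instance Definition _ := GRing.isScalable.Build K (qpoly_alg h) A *:%R
  (qpoly_eval root_b) qpoly_eval_is_scalable.

Lemma qpoly_evalC (r : R) : qpoly_eval root_b (qpolyC h r) = rho r.
Proof. by rewrite /qpoly_eval qpolyCE map_polyC hornerC. Qed.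

Lemma qpoly_evalX : qpoly_eval root_b 'qX = b.
Proof. by rewrite /qpoly_eval /= horner_map_rmodp map_polyX hornerX. Qed.

End QpolyEval.

Section MpolyEval.
Variables (K : fieldType) (n : nat) (A : comAlgType K) (v : 'I_n -> A).

Definition mpoly_eval (q : {mpoly K[n]}) : A := mmap (in_alg A) v q.
HB.instance Definition _ := GRing.RMorphism.copy mpoly_eval (mmap (in_alg A) v).

Fact mpoly_eval_is_scalable : scalable mpoly_eval.
Proof. by move=> k q; rewrite /mpoly_eval mmapZ /= mulr_algl. Qed.

HB.instance Definition _ := GRing.isScalable.Build K {mpoly K[n]} A *:%R mpoly_eval
  mpoly_eval_is_scalable.

Lemma mpoly_evalC k : mpoly_eval k%:MP = k%:A.
Proof. by rewrite /mpoly_eval mmapC. Qed.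

Lemma mpoly_evalX i : mpoly_eval 'X_i = v i.
Proof. by rewrite /mpoly_eval mmapX mmap1U. Qed.

End MpolyEval.

Lemma mpoly_rmorph_ext (K : fieldType) (n : nat) (S : comNzRingType)
    (f g : {rmorphism {mpoly K[n]} -> S}) :
  (forall k, f k%:MP = g k%:MP) -> (forall i, f 'X_i = g 'X_i) -> f =1 g.
Proof.
move=> eqC eqX q; rewrite (mpolyE q) !rmorph_sum; apply: eq_bigr => m _.
rewrite -mul_mpolyC !rmorphM eqC mpolyXE_id !rmorph_prod; congr (_ * _).
by apply: eq_bigr => i _; rewrite !rmorphXn eqX.
Qed.

Section N0CoordinateRing.
Variables (K : fieldType) (L : fieldExtType K) (p : nat).
Hypothesis pcharKp : p \in [pchar K].
Hypothesis frobL : forall y : L, y ^+ p \in 1%VS.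

Local Notation n := (\dim {:L}).
Local Notation c i := (frobc (L:=L) p i).
Local Notation i0 := (i0 L).
Local Notation R := {mpoly K[n]}.

Definition xp_i0 : R := - (c i0)^-1 *: \sum_(i < n | i != i0) c i *: 'X_i ^+ p.

(* N0ring = R[W]/(N0poly) is the coordinate ring of N_0, with W standing for the
   coordinate x_i0. *)
Definition N0poly : {poly R} := 'X^p - xp_i0%:P.

Lemma size_N0poly : size N0poly = p.+1.
Proof. exact: size_XnsubC (p_gt0 pcharKp). Qed.

Lemma mk_monic_N0poly : mk_monic N0poly = N0poly.
Proof.
by rewrite /mk_monic size_N0poly ltnS (p_gt0 pcharKp) monicXnsubC ?(p_gt0 pcharKp).
Qed.

Definition N0ring : comAlgType K := qpoly_alg N0poly.

Local Notation qC := (qpolyC N0poly).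

Lemma N0ring_algE (k : K) : (k%:A : N0ring) = qC k%:MP.
Proof. by apply: val_inj => /=; rewrite alg_mpolyC -mul_polyC mulr1. Qed.

Lemma qpolyX_expr : ('qX : N0ring) ^+ p = qC xp_i0.
Proof.
have := in_qpoly_mk_monic N0poly; rewrite mk_monic_N0poly rmorphB /= in_qpolyC.
by rewrite rmorphXn /= => /eqP; rewrite subr_eq0 => /eqP.
Qed.

Definition univ : 'rV[N0ring]_n := \row_i (if i == i0 then 'qX else qC 'X_i).

Lemma univ_N0 : inN0 p univ.
Proof.
apply/eqP; rewrite (bigD1 i0) //= mxE eqxx qpolyX_expr N0ring_algE -rmorphM.
under eq_bigr => i /negbTE i_neq0 do rewrite mxE i_neq0 N0ring_algE -rmorphXn -rmorphM.
rewrite -rmorph_sum -rmorphD -[RHS](rmorph0 qC); congr qC.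
rewrite mulrC mul_mpolyC /xp_i0 scalerA mulrN mulfV ?frobc_neq0 // scaleN1r.
apply/eqP; rewrite addrC subr_eq0; apply/eqP/eq_bigr => i _.
by rewrite mulrC mul_mpolyC.
Qed.

Section ClassifyingMap.
Variables (A : comAlgType K) (x : 'rV[A]_n) (z : A).
Hypothesis x_N0 : inN0 p x.

(* [z] is an arbitrary value for the unused variable X_i0. *)
Definition N0_coords (i : 'I_n) : A := if i == i0 then z else x 0 i.

Lemma root_N0poly : root (map_poly (mpoly_eval N0_coords) (mk_monic N0poly)) (x 0 i0).
Proof.
move: x_N0; rewrite /inN0 (bigD1 i0) //= addr_eq0 => /eqP xi0_eq.
rewrite mk_monic_N0poly rmorphB /= map_polyXn map_polyC.
rewrite /root hornerD hornerN hornerXn hornerC subr_eq0; apply/eqP.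
rewrite /xp_i0 /= linearZ rmorph_sum /=.
under eq_bigr => i /negbTE i_neq0 do
  rewrite linearZ /= rmorphXn /= mpoly_evalX /N0_coords i_neq0.
rewrite -[LHS]scale1r -(mulVf (frobc_neq0 frobL i0)) -scalerA -[c i0 *: _]mulr_algr xi0_eq.
by rewrite scaleNr scalerN; congr (- (_ *: _)); apply: eq_bigr => i _; rewrite mulr_algr.
Qed.

Definition N0eval : {lrmorphism N0ring -> A} := qpoly_eval root_N0poly.

Lemma N0eval_univ : map_mx N0eval univ = x.
Proof.
apply/rowP => i; rewrite !mxE; case: eqP => [->|/eqP i_neq0]; first exact: qpoly_evalX.
by rewrite /N0eval /= qpoly_evalC /= mpoly_evalX /N0_coords (negbTE i_neq0).
Qed.

End ClassifyingMap.

End N0CoordinateRing.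

Lemma pchar_deriv_eqC (K : fieldType) (R : lalgType K) (p : nat) (q : {poly R}) (a : R) :
  p \in [pchar K] -> (size q <= p)%N -> q^`() = a%:P -> q = (q`_0)%:P + a *: 'X.
Proof.
move=> pcharKp size_q deriv_q; apply/polyP => i.
rewrite coefD coefC coefZ coefX.
have coef_q k : q`_k.+1 *+ k.+1 = (a%:P)`_k by rewrite -deriv_q coef_deriv.
case: i => [|[|k]]; rewrite /= ?mulr0 ?addr0 ?add0r //.
  by have := coef_q 0%N; rewrite coefC mulr1.
have [k_lt|k_ge] := ltnP k.+2 p; last exact: nth_default (leq_trans size_q k_ge).
have := coef_q k.+1; rewrite coefC /= -scaler_nat => /(congr1 (fun v => (k.+2%:R : K)^-1 *: v)).
rewrite scalerA mulVf ?scale1r ?scaler0 // -(dvdn_pcharf pcharKp) gtnNdvd //.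
Qed.

Section FrobeniusCoordinates.
Variables (K : fieldType) (L : fieldExtType K) (p : nat).
Hypothesis pcharKp : p \in [pchar K].
Hypothesis frobL : forall y : L, y ^+ p \in 1%VS.

Local Notation n := (\dim {:L}).
Local Notation e i := (tnth (pb L) i).
Local Notation c i := (frobc (L:=L) p i).
Local Notation R := {mpoly K[n]}.

Definition lift_coords (r : 'I_n -> R) : {mpoly L[n]} :=
  \sum_j e j *: map_mpoly (in_alg L) (r j).

Lemma coord_mcoeff_lift_coords r m j : coord (pb L) j (lift_coords r)@_m = (r j)@_m.
Proof.
rewrite raddf_sum -(coord_pb_sum (fun j => (r j)@_m)); congr coord.
by apply: eq_bigr => i _; rewrite /= mcoeffZ mcoeff_map_mpoly /= mulr_algr.
Qed.

Lemma lift_coords_expr r : lift_coords r ^+ p = map_mpoly (in_alg L) (\sum_j c j *: r j ^+ p).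
Proof.
have pcharLX : p \in [pchar {mpoly L[n]}] by rewrite (pchar_lalg {mpoly L[n]}) lalg_pchar.
rewrite (pchar_expr_sum pcharLX) rmorph_sum; apply: eq_bigr => j _.
by rewrite exprZn (frobcE frobL) /= map_mpolyZ rmorphXn.
Qed.

Lemma sum_frobc_expr_inj (r t : 'I_n -> R) :
  \sum_j c j *: r j ^+ p = \sum_j c j *: t j ^+ p -> r =1 t.
Proof.
move=> eq_expr j; apply/mpolyP => m; rewrite -!coord_mcoeff_lift_coords.
suff -> : lift_coords r = lift_coords t by [].
have pcharLX : p \in [pchar {mpoly L[n]}] by rewrite (pchar_lalg {mpoly L[n]}) lalg_pchar.
suff : (lift_coords r - lift_coords t) ^+ p == 0.
  by rewrite expf_eq0 (p_gt0 pcharKp) subr_eq0 => /eqP.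
by rewrite (pchar_exprB pcharLX) !lift_coords_expr eq_expr subrr.
Qed.

End FrobeniusCoordinates.

Section Surjectivity.
Variables (K : fieldType) (L : fieldExtType K) (p : nat).
Hypothesis pcharKp : p \in [pchar K].
Hypothesis frobL : forall y : L, y ^+ p \in 1%VS.
Variable eta : forall A : comAlgType K, 'rV[A]_(\dim {:L}) -> 'rV[A]_(\dim {:L}).
Arguments eta : clear implicits.
Hypothesis eta_endo : is_endo p eta.

Local Notation n := (\dim {:L}).
Local Notation e i := (tnth (pb L) i).
Local Notation c i := (frobc (L:=L) p i).
Local Notation i0 := (i0 L).
Local Notation R := {mpoly K[n]}.
Local Notation N0ring := (N0ring L p).
Local Notation qC := (qpolyC (N0poly L p)).
Local Notation W := ('qX : N0ring).
Local Notation univ := (univ L p).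

Definition tangent (j : 'I_n) : K := (eta (dual K^o) (eps_row L K^o) 0 j).2.

Lemma eta_eps_row (A : comAlgType K) :
  eta (dual A) (eps_row L A) = \row_j (0, (tangent j)%:A).
Proof.
have eps_N0 := eps_row_N0 L pcharKp.
rewrite -(map_eps_row L (scalar_alg A)) -(endo_map eta_endo) //; apply/rowP => j.
have /rowP /(_ j) := endo_map eta_endo (dual_fst K^o) (eps_N0 K^o).
have -> : map_mx (dual_fst K^o) (eps_row L K^o) = 0.
  by apply/rowP => i; rewrite !mxE; case: eqP.
rewrite (endo0 eta_endo pcharKp) !mxE /tangent /dual_fst /dual_map /=.
case: (eta _ (eps_row L _) 0 j) => u v /= ->.
by apply: injective_projections; rewrite /= ?rmorph0.
Qed.

Definition eta_univ : 'rV[N0ring]_n := eta N0ring univ.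

Definition univ_eps : 'rV[dual N0ring]_n :=
  map_mx (dual_const N0ring) univ + eps_row L N0ring.

Lemma univ_eps_N0 : inN0 p univ_eps.
Proof.
exact: (inN0D pcharKp (inN0_map (dual_const N0ring) (univ_N0 pcharKp frobL))
  (eps_row_N0 L pcharKp N0ring)).
Qed.

Local Notation phi :=
  (N0eval pcharKp frobL (dual_const N0ring (qC 'X_i0)) univ_eps_N0).

Lemma univ_eps_i0 : univ_eps 0 i0 = ('qX, 1).
Proof. by rewrite !mxE eqxx; apply: injective_projections; rewrite /= ?addr0 ?add0r. Qed.

Lemma phiE (g : N0ring) : phi g = (g, (map_poly qC (g : {poly %/ N0poly L p})^`()).[W]).
Proof.
have rhoE : mpoly_eval (N0_coords univ_eps (dual_const N0ring (qC 'X_i0))) =1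
    dual_const N0ring \o qC.
  apply: (mpoly_rmorph_ext (f := mpoly_eval _) (g := dual_const N0ring \o qC)) => [k|i].
    by rewrite /= mpoly_evalC -N0ring_algE (rmorph_alg (dual_const N0ring)).
  rewrite /= mpoly_evalX /N0_coords; case: eqP => [-> //|/eqP i_neq0].
  by rewrite !mxE (negbTE i_neq0) addr0.
rewrite /= /qpoly_eval (eq_map_poly rhoE) map_poly_comp univ_eps_i0 horner_dual.
by rewrite qpoly_horner deriv_map.
Qed.

Lemma size_N0ring (g : N0ring) : (size (g : {poly %/ N0poly L p}) <= p)%N.
Proof.
have size_mk : size (mk_monic (N0poly L p)) = p.+1.
  by rewrite mk_monic_N0poly // size_N0poly.
by rewrite -ltnS -size_mk size_mk_monic.
Qed.

Lemma phi_eta_univ j : phi (eta_univ 0 j) = (eta_univ 0 j, (tangent j)%:A).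
Proof.
have univN0 := univ_N0 pcharKp frobL.
have := endo_map eta_endo phi univN0.
rewrite N0eval_univ /univ_eps (endoD eta_endo) ?eta_eps_row ?(eps_row_N0 L pcharKp)
  ?inN0_map // -(endo_map eta_endo) // => /rowP /(_ j).
rewrite !mxE => ->.
by apply: injective_projections; rewrite /= ?addr0 ?add0r.
Qed.

Lemma deriv_eta_univ j :
  (eta_univ 0 j : {poly %/ N0poly L p})^`() = ((tangent j)%:MP)%:P.
Proof.
have := phi_eta_univ j; rewrite phiE => /(congr1 snd) /=.
rewrite horner_qpolyX N0ring_algE => /(congr1 val) /=; rewrite rmodp_small //.
exact: leq_ltn_trans (size_poly _ _) (leq_ltn_trans (leq_pred _) (size_mk_monic _)).
Qed.

Definition coef0 j : R := (eta_univ 0 j : {poly %/ N0poly L p})`_0.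

Lemma eta_univE j : eta_univ 0 j = qC (coef0 j) + qC (tangent j)%:MP * W.
Proof.
rewrite -[LHS]qpoly_horner (pchar_deriv_eqC pcharKp (size_N0ring _) (deriv_eta_univ j)).
by rewrite rmorphD /= map_polyC map_polyZ /= map_polyX hornerD hornerC hornerZ hornerX.
Qed.

Lemma coef0_relation :
  \sum_j c j *: coef0 j ^+ p = - (\sum_j c j * tangent j ^+ p) *: xp_i0 L p.
Proof.
have /eqP := endo_inN0 eta_endo (univ_N0 pcharKp frobL).
have pcharN0 := lalg_pchar pcharKp N0ring.
under eq_bigr => j _ do rewrite -/eta_univ eta_univE (pchar_exprD pcharN0) exprMn
  (qpolyX_expr L pcharKp) N0ring_algE -!(rmorphXn qC) -rmorphM -rmorphD -rmorphM
  mulrDl [coef0 j ^+ p * _]mulrC mul_mpolyC.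
rewrite -rmorph_sum -(rmorph0 qC) => /qpolyC_inj /eqP.
rewrite big_split addr_eq0 /= => /eqP ->; rewrite scaleNr scaler_suml; congr (- _).
apply: eq_bigr => j _.
by rewrite mulrAC -rmorphXn -rmorphM mul_mpolyC mulrC.
Qed.

Definition endo_scalar : L := (\sum_j tangent j *: e j) / e i0.

Lemma coord_endo_scalar j : coord (pb L) j (endo_scalar * e i0) = tangent j.
Proof. by rewrite divfK ?pb_neq0 // coord_pb_sum. Qed.

Lemma endo_scalar_expr : endo_scalar ^+ p = ((\sum_j c j * tangent j ^+ p) / c i0)%:A.
Proof.
rewrite expr_div_n (pchar_expr_sum (lalg_pchar pcharKp L)) (frobcE frobL i0).
rewrite -[RHS]/(in_alg L _) fmorph_div /= scaler_suml; congr (_ / _).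
by apply: eq_bigr => j _; rewrite exprZn (frobcE frobL) scalerA mulrC.
Qed.

Definition linear_coef0 j : R :=
  \sum_(i < n | i != i0) coord (pb L) j (endo_scalar * e i) *: 'X_i.

Lemma linear_relation :
  \sum_j c j *: linear_coef0 j ^+ p = - (\sum_j c j * tangent j ^+ p) *: xp_i0 L p.
Proof.
have pcharR : p \in [pchar R] by rewrite (pchar_lalg R).
under eq_bigr => j _ do rewrite (pchar_expr_sum pcharR) scaler_sumr.
rewrite exchange_big /xp_i0 scalerA mulrNN scaler_sumr; apply: eq_bigr => i _.
under eq_bigr do rewrite exprZn scalerA mulrC.
by rewrite -scaler_suml scalerA (sum_coord_mul_expr pcharKp frobL i endo_scalar_expr).
Qed.

Lemma coef0E : coef0 =1 linear_coef0.
Proof.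
apply: (sum_frobc_expr_inj pcharKp frobL).
by rewrite coef0_relation linear_relation.
Qed.

Lemma endo_mulL (A : comAlgType K) (x : 'rV[A]_n) :
  inN0 p x -> eta A x = mulL endo_scalar x.
Proof.
move=> x_N0; rewrite -[in LHS](N0eval_univ pcharKp frobL 0 x_N0).
rewrite -(endo_map eta_endo) ?univ_N0 //.
apply/rowP => j; rewrite -/eta_univ !mxE eta_univE /N0eval.
rewrite rmorphD rmorphM /= !qpoly_evalC qpoly_evalX coef0E /= mpoly_evalC.
rewrite (bigD1 i0) //= coord_endo_scalar addrC mulrC; congr (_ + _).
rewrite /linear_coef0 rmorph_sum; apply: eq_bigr => i /negbTE i_neq0.
by rewrite /= linearZ /= mpoly_evalX /N0_coords i_neq0 mulr_algr.
Qed.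

End Surjectivity.

Theorem proposition9p1 (K : fieldType) (L : fieldExtType K) (p : nat)
  (hp : p \in [pchar K])
  (hL1 : forall y : L, y ^+ p \in 1%VS)
  (hL2 : forall k : K, exists y : L, y ^+ p = k%:A) :
  (* a' |-> multiplication by a' lands in End_K(N_0) *)
  (forall a : L, is_endo p (mulL a)) /\
  (* it is injective *)
  (forall a b : L,
     (forall (A : comAlgType K) (x : 'rV[A]_(\dim {:L})), inN0 p x ->
        mulL a x = mulL b x) -> a = b) /\
  (* it is surjective *)
  (forall eta : forall A : comAlgType K, 'rV[A]_(\dim {:L}) -> 'rV[A]_(\dim {:L}),
     is_endo p eta ->
     exists a : L, forall (A : comAlgType K) (x : 'rV[A]_(\dim {:L})), inN0 p x ->
        eta A x = mulL a x) /\
  (* it is a ring homomorphism (End ring: pointwise sum, composition) *)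
  (forall (A : comAlgType K) (x : 'rV[A]_(\dim {:L})), inN0 p x -> mulL 1 x = x) /\
  (forall (a b : L) (A : comAlgType K) (x : 'rV[A]_(\dim {:L})), inN0 p x ->
     mulL (a + b) x = mulL a x + mulL b x) /\
  (forall (a b : L) (A : comAlgType K) (x : 'rV[A]_(\dim {:L})), inN0 p x ->
     mulL (a * b) x = mulL a (mulL b x)).
Proof.
split; first exact: mulL_is_endo hp hL1.
split; first exact: mulL_inj hp.
split; first by move=> eta eta_endo; exists (endo_scalar eta); exact: endo_mulL.
split; first by move=> A x _; exact: mulL1.
split; first by move=> a b A x _; exact: mulLDl.
by move=> a b A x _; exact: mulLM.
Qed.
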